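(* Let $3\le k\le n-1$ and let $T$ be a tree attaining the maximum value of $M_2$ over $\mathcal{CT}_{n,k}$. Then $T$ contains no internal path of length greater than $1$.
   Context: A chemical tree is a tree with maximum degree at most $4$. A branching vertex is a vertex of degree greater than $2$. An internal path is a path $u_0\cdots u_r$ ($r\ge1$) whose end vertices $u_0,u_r$ are branching and whose internal vertices all have degree $2$; its length is $r$. A segment of a tree is a path of positive length neither of whose end vertices has degree $2$ and all of whose internal vertices have degree $2$. $\mathcal{CT}_{n,k}$ is the class of all $n$-vertex chemical trees with exactly $k$ segments. $M_2(G)=\sum_{uv\in E(G)}d_ud_v$, where $d_v$ is the degree of $v$. *)

From mathcomp Require Import all_boot.
Set Implicit Arguments. Unset Strict Implicit. Unset Printing Implicit Defensive.

Section Graphs.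
Variable n : nat.
Implicit Types (e : rel 'I_n) (x y : 'I_n) (p : seq 'I_n).

Definition deg e x : nat := #|[set y | e x y]|.

Definition edges e : {set 'I_n * 'I_n} :=
  [set uv : 'I_n * 'I_n | e uv.1 uv.2 && (uv.1 < uv.2)%N].

Definition is_tree e : Prop :=
  [/\ symmetric e, irreflexive e, (forall x y, connect e x y)
    & #|edges e| = n.-1].

Definition is_chemical_tree e : Prop :=
  is_tree e /\ forall x, deg e x <= 4.

(* a path x :: p of positive length size p (distinct vertices) *)
Definition is_gpath e x p : bool :=
  [&& p != [::], uniq (x :: p) & path e x p].

Definition inner_vertices x p : seq 'I_n := behead (belast x p).

Definition segment e x p : bool :=
  [&& is_gpath e x p, deg e x != 2, deg e (last x p) != 2
    & all (fun v => deg e v == 2) (inner_vertices x p)].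

Definition internal_path e x p : bool :=
  [&& is_gpath e x p, 2 < deg e x, 2 < deg e (last x p)
    & all (fun v => deg e v == 2) (inner_vertices x p)].

(* A segment is counted by its (unordered) pair of end
   vertices; in a tree the path between two vertices is unique, so this is
   exactly the number of segments.  Paths with distinct vertices have at most
   n vertices, hence are represented by tuples of length m <= n. *)
Definition seg_ends e : {set 'I_n * 'I_n} :=
  [set uv : 'I_n * 'I_n | (uv.1 < uv.2)%N &&
     [exists m : 'I_n.+1, exists t : (nat_of_ord m).-tuple 'I_n,
        segment e uv.1 t && (last uv.1 t == uv.2)]].

Definition num_segments e : nat := #|seg_ends e|.

Definition in_CT e k : Prop := is_chemical_tree e /\ num_segments e = k.

Definition M2 e : nat := \sum_(uv in edges e) deg e uv.1 * deg e uv.2.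

End Graphs.

From mathcomp Require Import all_boot zify.
Set Implicit Arguments. Unset Strict Implicit. Unset Printing Implicit Defensive.

Section Consecutive.
Variable T : eqType.
Implicit Types (s t : seq T) (a b u v z : T).

Definition consecutive s u v := (u, v) \in zip s (behead s).

Lemma consecutive_cons2 a b s u v :
  consecutive [:: a, b & s] u v = ((u, v) == (a, b)) || consecutive (b :: s) u v.
Proof. by rewrite /consecutive /= inE. Qed.

Lemma consecutiveP s u v :
  reflect (exists s1 s2, s = s1 ++ [:: u, v & s2]) (consecutive s u v).
Proof.
apply: (iffP idP) => [|[s1 [s2 ->]]]; last first.
  by elim: s1 => [|a [|b s1] IH]; rewrite ?consecutive_cons2 ?eqxx ?IH ?orbT.
elim: s => [|a [|b s] IH] //; rewrite consecutive_cons2.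
case/orP=> [/eqP[-> ->]|/IH[s1 [s2 ->]]]; first by exists [::], s.
by exists (a :: s1), s2.
Qed.

Lemma consecutive_mem s u v : consecutive s u v -> (u \in s) && (v \in s).
Proof. by case/consecutiveP=> s1 [s2 ->]; rewrite !mem_cat !inE !eqxx !orbT. Qed.

Lemma consecutive_catl s t u v : consecutive s u v -> consecutive (s ++ t) u v.
Proof. by case/consecutiveP=> s1 [s2 ->]; apply/consecutiveP; exists s1, (s2 ++ t); rewrite -catA. Qed.

Lemma consecutive_catr s t u v : consecutive t u v -> consecutive (s ++ t) u v.
Proof. by case/consecutiveP=> s1 [s2 ->]; apply/consecutiveP; exists (s ++ s1), s2; rewrite catA. Qed.

Lemma consecutive_rev s u v : consecutive (rev s) u v = consecutive s v u.
Proof.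
suff imp t a b : consecutive t a b -> consecutive (rev t) b a.
  by apply/idP/idP => /imp; rewrite ?revK.
case/consecutiveP=> s1 [s2 ->]; apply/consecutiveP.
by exists (rev s2), (rev s1); rewrite rev_cat !rev_cons -!cats1 -!catA.
Qed.

Lemma consecutive_head_pred s u a : uniq (u :: s) -> ~~ consecutive (u :: s) a u.
Proof.
move=> U; apply/consecutiveP => -[[|b s1] [s2 /= [E1 E2]]].
  by move: U; rewrite E2 /= inE eqxx.
by move: U; rewrite /= E2 mem_cat !inE eqxx !orbT.
Qed.

Lemma consecutive_head_succ s u b : uniq (u :: s) -> consecutive (u :: s) u b -> b = head u s.
Proof.
case: s => [|c s] //; rewrite consecutive_cons2 => U /orP[/eqP[->]//|/consecutive_mem/andP[us _]].
by move: U; rewrite /= us.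
Qed.

Lemma sorted_consecutiveP (e : rel T) s :
  reflect (forall u v, consecutive s u v -> e u v) (sorted e s).
Proof.
apply: (iffP idP); case: s => [|a s] //=.
  elim: s a => [|b s IH] a //= /andP[eab /IH H] u v.
  by rewrite consecutive_cons2 => /orP[/eqP[-> ->] //|]; apply: H.
elim: s a => [|b s IH] a //= H; rewrite H ?consecutive_cons2 ?eqxx //=.
by apply: IH => u v uv; apply: H; rewrite consecutive_cons2 uv orbT.
Qed.

Lemma sub_consecutive_sorted (e e' : rel T) s :
  (forall u v, consecutive s u v -> e u v -> e' u v) -> sorted e s -> sorted e' s.
Proof.
move=> ee' /sorted_consecutiveP es; apply/sorted_consecutiveP => u v uv.
exact/ee'/es.
Qed.

Lemma sorted_rev_sym (e : rel T) s : symmetric e -> sorted e (rev s) = sorted e s.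
Proof. by move=> sym; rewrite rev_sorted; apply: eq_sorted => u v; rewrite sym. Qed.

Lemma head_rev a s : head a (rev s) = last a s.
Proof. by case/lastP: s => [|s z] //; rewrite rev_rcons last_rcons. Qed.

Lemma last_rev a s : last a (rev s) = head a s.
Proof. by case: s => [|z s] //; rewrite rev_cons last_rcons. Qed.

Lemma head_cat_cons a s1 z s2 : head a (s1 ++ z :: s2) = head z s1.
Proof. by case: s1. Qed.

Lemma rev_cons_rcons a s b : rev (a :: rcons s b) = b :: rcons (rev s) a.
Proof. by rewrite rev_cons rev_rcons. Qed.

Lemma uniq_end_split s1 z s2 a : uniq (s1 ++ z :: s2) ->
  z = head a (s1 ++ z :: s2) \/ z = last a (s1 ++ z :: s2) -> s1 = [::] \/ s2 = [::].
Proof.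
case: s1 => [|b s1]; first by left.
case: s2 => [|c s2]; first by right.
rewrite cat_uniq last_cat /= => /and5P[_ /norP[zs1 _] zc _ _] [zb|zl].
  by case/negP: zs1; rewrite zb mem_head.
by case/negP: zc; rewrite zl mem_last.
Qed.

Lemma uniq_cat3_notin s1 m s2 z : uniq (s1 ++ m ++ s2) -> z \in m ->
  (z \notin s1) && (z \notin s2).
Proof.
rewrite cat_uniq => /and3P[_ /hasPn s1N]; rewrite cat_uniq => /and3P[_ /hasPn mN _] zm.
by rewrite (contraL (mN z) zm) s1N // mem_cat zm.
Qed.

Lemma interior_split s z a : z \in s -> z != head a s -> z != last a s ->
  exists s1 u v s2, s = s1 ++ [:: u, z, v & s2].
Proof.
case/splitPr=> s1 s2; case/lastP: s1 => [|s1 u]; first by rewrite eqxx.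
case: s2 => [|v s2]; first by rewrite last_cat eqxx.
by move=> _ _; exists s1, u, v, s2; rewrite cat_rcons.
Qed.

End Consecutive.

Section Counting.
Variable n : nat.
Implicit Types (e : rel 'I_n) (a b u v z : 'I_n).

Lemma deg_eq e1 e2 z : e1 =2 e2 -> deg e1 z = deg e2 z.
Proof. by move=> E; apply: eq_card => v; rewrite !inE E. Qed.

Lemma deg_sum e z : deg e z = \sum_v e z v.
Proof. by rewrite /deg -sum1dep_card big_mkcond; apply: eq_bigr => v _; case: (e z v). Qed.

Lemma deg_double_sum e z : deg e z = \sum_u \sum_v e u v * (u == z).
Proof.
rewrite deg_sum [RHS](bigD1 z) //= eqxx [X in _ + X]big1 ?addn0.
  by apply: eq_bigr => v _; rewrite muln1.
by move=> u /negbTE uz; apply: big1 => v _; rewrite uz muln0.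
Qed.

Lemma deg_le_nbrs e b (A : {set 'I_n}) : {subset A <= e b} -> #|A| <= deg e b.
Proof. by move=> Ab; apply: subset_leq_card; apply/subsetP => v /Ab; rewrite inE. Qed.

Lemma leaf_nbr e b a z : deg e b = 1 -> e b a -> e b z -> z = a.
Proof.
move=> Db ba bz; apply/eqP; apply: contraT => za.
suff : #|[set a; z]| <= deg e b by rewrite cards2 eq_sym za Db.
by apply: deg_le_nbrs => v; rewrite !inE => /orP[]/eqP->.
Qed.

Lemma deg2_nbr e b a c z : deg e b = 2 -> e b a -> e b c -> a != c -> e b z ->
  z = a \/ z = c.
Proof.
move=> Db ba bc ac bz; case: (eqVneq z a) => [|za]; first by left.
case: (eqVneq z c) => [|zc]; first by right.
suff : #|z |: [set a; c]| <= deg e b by rewrite cardsU1 cards2 !inE negb_or za zc ac Db.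
by apply: deg_le_nbrs => v; rewrite !inE => /or3P[]/eqP->.
Qed.

Lemma sum_edges e (f : 'I_n -> 'I_n -> nat) : symmetric e -> irreflexive e ->
  (forall u v, f u v = f v u) ->
  2 * \sum_(uv in edges e) f uv.1 uv.2 = \sum_u \sum_v e u v * f u v.
Proof.
move=> sym irr fsym; pose g u v := (e u v && (u < v)%N) * f u v.
have -> : \sum_(uv in edges e) f uv.1 uv.2 = \sum_u \sum_v g u v.
  rewrite pair_bigA big_mkcond; apply: eq_bigr => -[u v] _.
  by rewrite inE /g; case: (_ && _); rewrite ?mul1n.
rewrite mul2n -addnn [X in X + _]exchange_big -big_split; apply: eq_bigr => u _.
rewrite -big_split; apply: eq_bigr => v _; rewrite /g (sym v u) (fsym v u).
by case: (ltngtP u v) => [||/val_inj->]; rewrite ?irr ?andbT ?andbF //= addn0.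
Qed.

Lemma card_edges_sum e : symmetric e -> irreflexive e ->
  2 * #|edges e| = \sum_u \sum_v e u v * 1.
Proof. by move=> sym irr; rewrite -sum1_card; apply: sum_edges. Qed.

Lemma M2_sum e : symmetric e -> irreflexive e ->
  2 * M2 e = \sum_u \sum_v e u v * (deg e u * deg e v).
Proof. by move=> sym irr; apply: sum_edges => // u v; rewrite mulnC. Qed.

Lemma sum_degs e : symmetric e -> irreflexive e -> \sum_u deg e u = 2 * #|edges e|.
Proof.
move=> sym irr; rewrite card_edges_sum //; apply: eq_bigr => u _.
by rewrite deg_sum; apply: eq_bigr => v _; rewrite muln1.
Qed.

Lemma sum_exchange e e' (R A : seq ('I_n * 'I_n)) (g : 'I_n -> 'I_n -> nat) :
  uniq R -> uniq A ->
  (forall u v, e' u v + ((u, v) \in R) = e u v + ((u, v) \in A)) ->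
  \sum_u \sum_v e' u v * g u v + \sum_(uv <- R) g uv.1 uv.2 =
  \sum_u \sum_v e u v * g u v + \sum_(uv <- A) g uv.1 uv.2.
Proof.
have pairs (L : seq ('I_n * 'I_n)) : uniq L ->
    \sum_(uv <- L) g uv.1 uv.2 = \sum_u \sum_v ((u, v) \in L) * g u v.
  move=> uL; rewrite pair_bigA (big_uniq _ uL) big_mkcond; apply: eq_bigr => -[u v] _.
  by case: ((u, v) \in L); rewrite ?mul1n.
move=> uR uA eE; rewrite (pairs R uR) (pairs A uA) -!big_split.
apply: eq_bigr => u _; rewrite -!big_split; apply: eq_bigr => v _.
by rewrite /= -!mulnDl eE.
Qed.

End Counting.

Section Segments.
Variables (n : nat) (d : 'I_n).
Implicit Types (e : rel 'I_n) (s t : seq 'I_n) (a u v z : 'I_n).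

Record segment_seq e s : Prop := SegmentSeq {
  segment_size : 1 < size s;
  segment_uniq : uniq s;
  segment_sorted : sorted e s;
  segment_head : deg e (head d s) != 2;
  segment_last : deg e (last d s) != 2;
  segment_ends : forall z, z \in s -> deg e z != 2 -> z = head d s \/ z = last d s }.

Lemma segmentE e a t : segment e a t <-> segment_seq e (a :: t).
Proof.
rewrite /segment /is_gpath /inner_vertices; case: t => [|b t].
  by split=> // -[].
have t_rcons := lastI b t; split.
  case/and4P=> /and3P[_ U P] da dl /allP inner; split => // z.
  rewrite inE => /orP[/eqP->|zt dz]; first by left.
  case: (eqVneq z (last b t)) => [->|zl]; first by right.
  have : z \in belast b t by move: zt; rewrite t_rcons mem_rcons inE (negbTE zl).
  by move/inner/eqP => z2; rewrite z2 in dz.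
case=> _ U P da dl ends; apply/and4P; split => //; first by apply/and3P.
apply/allP => z zb; apply: contraT => dz.
have zbt : z \in b :: t by rewrite t_rcons mem_rcons inE zb orbT.
have [za|zl] : z = a \/ z = last b t by apply: ends dz; rewrite inE zbt orbT.
  by move: U; rewrite /= -za zbt.
have : uniq (b :: t) by case/andP: U.
by rewrite t_rcons rcons_uniq -zl; move: zb => /= ->.
Qed.

Lemma segment_seq_rev e s : symmetric e -> segment_seq e s -> segment_seq e (rev s).
Proof.
move=> sym [sz U P dh dl ends]; split.
- by rewrite size_rev.
- by rewrite rev_uniq.
- by rewrite sorted_rev_sym.
- by rewrite head_rev.
- by rewrite last_rev.
- by move=> z; rewrite mem_rev head_rev last_rev => /ends H /H[]; auto.
Qed.

Lemma segment_seq_eq e1 e2 s : e1 =2 e2 -> segment_seq e1 s -> segment_seq e2 s.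
Proof.
move=> E [sz U P dh dl ends]; have D z := deg_eq z E.
split; rewrite -?D //; last by move=> z; rewrite -D; apply: ends.
by rewrite -(eq_sorted E).
Qed.

Lemma segment_end_split e s1 z s2 : segment_seq e (s1 ++ z :: s2) -> deg e z != 2 ->
  s1 = [::] \/ s2 = [::].
Proof.
move=> S dz; apply: (uniq_end_split (a := d)) (segment_uniq S) _.
have zs : z \in s1 ++ z :: s2 by rewrite mem_cat mem_head orbT.
exact: segment_ends S z zs dz.
Qed.

Lemma segment_seq_consecutive e s u v : segment_seq e s -> consecutive s u v ->
  deg e u != 2 -> deg e v != 2 -> s = [:: u; v].
Proof.
move=> S /consecutiveP[s1 [s2 Es]] du dv; rewrite Es in S *.
have [s1nil|//] := segment_end_split S du.
rewrite -cat_rcons in S; have [|->] := segment_end_split S dv; last by rewrite s1nil.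
by case: (s1).
Qed.

Definition seq_ends s := (head d s, last d s).

Definition realized e (ab : 'I_n * 'I_n) := exists2 s, segment_seq e s & seq_ends s = ab.

Lemma realized_rev e a b : symmetric e -> realized e (a, b) -> realized e (b, a).
Proof.
move=> sym [s S [ha lb]]; exists (rev s); first exact: segment_seq_rev.
by rewrite /seq_ends head_rev last_rev ha lb.
Qed.

Lemma realized_eq e1 e2 ab : e1 =2 e2 -> realized e1 ab -> realized e2 ab.
Proof. by move=> E [s S Es]; exists s => //; apply: segment_seq_eq S. Qed.

Lemma seg_ends_subset e e' :
  (forall s, segment_seq e s -> realized e' (seq_ends s)) -> seg_ends e \subset seg_ends e'.
Proof.
move=> embed; apply/subsetP => -[a b]; rewrite !inE /= => /andP[->].
case/existsP=> m /existsP[t /andP[/segmentE /embed[s' S' Es] /eqP <-]].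
case: s' S' Es => [[]//|a' t'] S' [/= <- <-].
have sz : size t' < n.+1.
  have := max_card (mem (a' :: t')); rewrite (card_uniqP (segment_uniq S')) card_ord.
  exact: ltnW.
apply/existsP; exists (Ordinal sz); apply/existsP; exists (in_tuple t').
by rewrite /= eqxx andbT; apply/segmentE.
Qed.

End Segments.

Section Unbranched.
Variable n : nat.
Implicit Types (e : rel 'I_n) (c s w L : seq 'I_n) (a b p q u v z : 'I_n).

Fixpoint unbranched e L : Prop :=
  match L with
  | u :: ((b :: v :: _) as t) => (forall z, e b z -> z = u \/ z = v) /\ unbranched e t
  | _ => True
  end.

Lemma rcons_head c q : rcons c q = head q c :: behead (rcons c q).
Proof. by case: c. Qed.

Lemma unbranched_cons3 e u b v L :
  unbranched e [:: u, b, v & L] =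
  ((forall z, e b z -> z = u \/ z = v) /\ unbranched e [:: b, v & L]).
Proof. by []. Qed.

Lemma unbranched_chain e p c q : symmetric e -> path e p (rcons c q) ->
  uniq (p :: rcons c q) -> all (fun z => deg e z == 2) c -> unbranched e (p :: rcons c q).
Proof.
move=> sym; elim: c p => [|b c IH] p //; rewrite rcons_cons.
move=> /andP[pb P] /andP[pU U] /andP[/eqP db D].
rewrite [rcons c q]rcons_head unbranched_cons3 -rcons_head; split; last exact: IH.
move=> z; apply: deg2_nbr => //; first by rewrite sym.
  by move: P; rewrite rcons_head => /andP[].
by apply: (contraNneq _ pU) => ->; rewrite rcons_head !inE eqxx orbT.
Qed.

Lemma unbranched_nbr e p c q z v : unbranched e (p :: rcons c q) ->
  z \in c -> e z v -> v \in p :: rcons c q.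
Proof.
elim: c p => [|b c IH] p //; rewrite rcons_cons [rcons c q]rcons_head unbranched_cons3.
rewrite -rcons_head => -[nb_b ub].
rewrite !inE => /orP[/eqP-> /nb_b[]->|zc zv]; rewrite ?eqxx ?orbT //.
  by rewrite [rcons c q]rcons_head mem_head !orbT.
by move: (IH b ub zc zv); rewrite inE => /orP[]->; rewrite ?orbT.
Qed.

Lemma unbranched_walk_prefix e a b L w : unbranched e [:: a, b & L] ->
  uniq [:: a, b & w] -> path e b w -> last b w \notin belast b L -> exists r, w = L ++ r.
Proof.
elim: L a b w => [|c L IH] a b w; first by exists w.
rewrite unbranched_cons3 => -[nb_b ub] U.
case: w U => [|z w] U; first by rewrite /= inE eqxx.
case/andP=> bz P; rewrite /= inE negb_or => /andP[_ wL].
have zc : z = c.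
  by case: (nb_b z bz) => // za; move: U; rewrite za /= !inE eqxx orbT.
subst z; have [r ->] := IH b c w ub (proj2 (andP U)) P wL.
by exists r.
Qed.

Lemma unbranched_walk_avoid e a b L s x0 : symmetric e -> uniq s -> sorted e s ->
  unbranched e [:: a, b & L] -> ~~ consecutive s a b -> ~~ consecutive s b a ->
  {in belast b L, forall z, z \in s -> (z != head x0 s) && (z != last x0 s)} ->
  {in belast b L, forall z, z \notin s}.
Proof.
move=> sym U /sorted_consecutiveP P.
elim: L a b => [|c L IH] a b; first by move=> _ _ _ _ z.
rewrite unbranched_cons3 => -[nb_b ub] nab nba inner.
have bs : b \notin s.
  apply/negP => bs; have /andP[bh bl] := inner b (mem_head _ _) bs.
  have [s1 [u [v [s2 Es]]]] := interior_split bs bh bl.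
  have cub : consecutive s u b by apply/consecutiveP; exists s1, (v :: s2).
  have cbv : consecutive s b v by apply/consecutiveP; exists (rcons s1 u), s2; rewrite cat_rcons.
  have uv : u != v.
    by apply: (contraTneq _ U) => uv; rewrite Es uv cat_uniq /= !inE eqxx orbT !andbF.
  have [ua|uc] : u = a \/ u = c by apply: nb_b; rewrite sym; apply: P.
    by rewrite -ua cub in nab.
  have [va|vc] := nb_b v (P _ _ cbv); first by rewrite -va cbv in nba.
  by rewrite uc vc eqxx in uv.
move=> z; rewrite inE => /orP[/eqP->//|zL].
apply: (IH b c) => // [||y yL]; last by apply: inner; rewrite inE yL orbT.
  by apply: contra bs => /consecutive_mem/andP[].
by apply: contra bs => /consecutive_mem/andP[].
Qed.

Lemma unbranched_head_nbr e p c q z : unbranched e (p :: rcons c q) ->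
  uniq (p :: rcons c q) -> c != [::] -> e (head q c) z -> z \notin c ->
  z = p \/ z = q /\ head q c = last p c.
Proof.
move=> ub U cne az zc.
have c1c : head q c \in c by case: c cne {ub U az zc} => // a c' _; apply: mem_head.
have := unbranched_nbr ub c1c az.
rewrite inE mem_rcons inE (negbTE zc) orbF => /orP[/eqP->|/eqP zq]; first by left.
right; split=> //; subst z; move: U; rewrite /= mem_rcons inE negb_or rcons_uniq.
case/and3P=> /andP[pq _] qc _.
case: c cne ub qc az zc c1c => // a [|b c'] //= _ [nb_a _] qc az _ _.
by case: (nb_a q az) => qb; [rewrite qb eqxx in pq | rewrite qb !inE eqxx orbT in qc].
Qed.

End Unbranched.

Section SymPairs.
Variable T : eqType.
Implicit Types (s : seq (T * T)) (u v : T).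

Definition sym_pairs s : seq (T * T) := s ++ [seq (uv.2, uv.1) | uv <- s].

Lemma mem_sym_pairs s u v : ((u, v) \in sym_pairs s) = ((u, v) \in s) || ((v, u) \in s).
Proof.
rewrite mem_cat; congr (_ || _); apply/mapP/idP => [[[a b] ab [-> ->]] //|vu].
by exists (v, u).
Qed.

Lemma sym_pairsC s u v : ((u, v) \in sym_pairs s) = ((v, u) \in sym_pairs s).
Proof. by rewrite !mem_sym_pairs orbC. Qed.

End SymPairs.

Section Relocation.
Variable n : nat.
Implicit Types (e : rel 'I_n) (c : seq 'I_n) (p q x y u v z : 'I_n).

Definition removed_edges p c q x y := [:: (p, head q c); (last p c, q); (x, y)].
Definition added_edges p c q x y := [:: (x, head q c); (last p c, y); (p, q)].

Definition relocate e p c q x y : rel 'I_n := fun u v =>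
  e u v && ((u, v) \notin sym_pairs (removed_edges p c q x y))
  || ((u, v) \in sym_pairs (added_edges p c q x y)).

Record relocatable e p c q x y : Prop := Relocatable {
  relocatable_sym : symmetric e;
  relocatable_irr : irreflexive e;
  relocatable_chain : c != [::];
  relocatable_path : path e p (rcons c q);
  relocatable_uniq : uniq (p :: rcons c q);
  relocatable_deg2 : all (fun z => deg e z == 2) c;
  relocatable_edge : e x y;
  relocatable_x : x \notin c;
  relocatable_y : y \notin c;
  relocatable_nedge : ~~ e p q;
  relocatable_neq : ((x, y) != (p, q)) && ((x, y) != (q, p));
  relocatable_ends : (deg e p != 2) && (deg e q != 2) || (deg e x != 2) && (deg e y != 2) }.

Lemma relocate_sym e p c q x y : symmetric e -> symmetric (relocate e p c q x y).
Proof. by move=> sym u v; rewrite /relocate sym sym_pairsC [in X in _ || X]sym_pairsC. Qed.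

Section Relocatable.
Variables (e : rel 'I_n) (p : 'I_n) (c : seq 'I_n) (q x y : 'I_n).
Hypothesis H : relocatable e p c q x y.
Local Notation c1 := (head q c).
Local Notation cm := (last p c).
Local Notation e' := (relocate e p c q x y).

Lemma chain_cons : exists a c', c = a :: c'.
Proof. by case: c (relocatable_chain H) => // a c' _; exists a, c'. Qed.

Lemma chain_head a : head a c = c1.
Proof. by case: c (relocatable_chain H). Qed.

Lemma chain_last a : last a c = cm.
Proof. by case: c (relocatable_chain H). Qed.

Lemma chain_head_in : c1 \in c.
Proof. by case: c (relocatable_chain H) => // a c' _; apply: mem_head. Qed.

Lemma chain_last_in : cm \in c.
Proof. by case: c (relocatable_chain H) => // a c' _ /=; apply: mem_last. Qed.

Lemma chain_ends_notin : [/\ p \notin c, q \notin c & p != q].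
Proof.
have := relocatable_uniq H; rewrite /= mem_rcons inE negb_or rcons_uniq.
by case/and3P=> /andP[pq pc] qc _.
Qed.

Lemma chain_uniq : uniq c.
Proof. by have := relocatable_uniq H; rewrite /= rcons_uniq => /and3P[]. Qed.

Lemma chain_deg z : z \in c -> deg e z = 2.
Proof. by move=> zc; apply/eqP; apply: (allP (relocatable_deg2 H)). Qed.

Lemma chain_head_edge : e p c1.
Proof. by case: c (relocatable_chain H) (relocatable_path H) => // a c' _ /andP[]. Qed.

Lemma chain_last_edge : e cm q.
Proof. by have := relocatable_path H; rewrite rcons_path => /andP[]. Qed.

Lemma chain_sorted : sorted e c.
Proof.
have := relocatable_path H; rewrite rcons_path => /andP[].
by case: c => //= a c' /andP[].
Qed.

Lemma chain_unbranched : unbranched e (p :: rcons c q).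
Proof.
by apply: unbranched_chain; [apply: relocatable_sym H|apply: relocatable_path H|
  apply: relocatable_uniq H|apply: relocatable_deg2 H].
Qed.

Lemma relocatable_xy : x != y.
Proof. by apply: contraTneq (relocatable_edge H) => ->; rewrite (relocatable_irr H). Qed.

Lemma relocation_pairs_uniq :
  uniq (sym_pairs (removed_edges p c q x y)) /\ uniq (sym_pairs (added_edges p c q x y)).
Proof.
have neqF a b : a != b -> (a == b) = false /\ (b == a) = false.
  by move=> ab; rewrite (negbTE ab) eq_sym (negbTE ab).
have neq_c a b : a \in c -> b \notin c -> (a == b) = false /\ (b == a) = false.
  by move=> ac bc; apply: neqF; apply: contraNneq bc => <-.
have [pc qc /neqF[pq qp]] := chain_ends_notin; have [xy yx] := neqF _ _ _ relocatable_xy.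
have xc := relocatable_x H; have yc := relocatable_y H.
have [c1p pc1] := neq_c _ _ chain_head_in pc; have [c1q qc1] := neq_c _ _ chain_head_in qc.
have [c1x xc1] := neq_c _ _ chain_head_in xc; have [c1y yc1] := neq_c _ _ chain_head_in yc.
have [cmp pcm] := neq_c _ _ chain_last_in pc; have [cmq qcm] := neq_c _ _ chain_last_in qc.
have [cmx xcm] := neq_c _ _ chain_last_in xc; have [cmy ycm] := neq_c _ _ chain_last_in yc.
by split; rewrite /= !inE !xpair_eqE ?c1p ?pc1 ?c1q ?qc1 ?c1x ?xc1 ?c1y ?yc1 ?cmp ?pcm
  ?cmq ?qcm ?cmx ?xcm ?cmy ?ycm ?pq ?qp ?xy ?yx /= ?andbF.
Qed.

Lemma chain_head_nbr z : e c1 z -> z \notin c -> z = p \/ z = q /\ c1 = cm.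
Proof.
apply: unbranched_head_nbr; [exact: chain_unbranched|exact: relocatable_uniq H|].
exact: relocatable_chain H.
Qed.

Lemma chain_rev_unbranched : unbranched e (q :: rcons (rev c) p).
Proof.
have sym := relocatable_sym H; apply: unbranched_chain => //.
- have flip : (fun u v => e v u) =2 e by move=> u v; rewrite sym.
  have := relocatable_path H; rewrite -(eq_path flip p) -rev_path.
  by rewrite last_rcons belast_rcons rev_cons.
- by rewrite -rev_cons_rcons rev_uniq; apply: relocatable_uniq H.
- by rewrite all_rev; apply: relocatable_deg2 H.
Qed.

Lemma chain_last_nbr z : e cm z -> z \notin c -> z = q \/ z = p /\ c1 = cm.
Proof.
move=> bz zc; have [||||->|[-> E]] := unbranched_head_nbr (z := z) chain_rev_unbranched.
- by rewrite -rev_cons_rcons rev_uniq; apply: relocatable_uniq H.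
- by rewrite -size_eq0 size_rev size_eq0; apply: relocatable_chain H.
- by rewrite head_rev.
- by rewrite mem_rev.
- by left.
- by right; split=> //; move: E; rewrite head_rev last_rev.
Qed.

Lemma removed_sub u v : (u, v) \in sym_pairs (removed_edges p c q x y) -> e u v.
Proof.
have E : all (fun uv => e uv.1 uv.2) (removed_edges p c q x y).
  by rewrite /= chain_head_edge chain_last_edge (relocatable_edge H).
by rewrite mem_sym_pairs => /orP[/(allP E)//|/(allP E)]; rewrite /= (relocatable_sym H).
Qed.

Lemma added_sub u v : (u, v) \in sym_pairs (added_edges p c q x y) -> e u v ->
  (u, v) \in sym_pairs (removed_edges p c q x y).
Proof.
have sym := relocatable_sym H.
have E : all (fun uv => e uv.1 uv.2 ==> (uv \in sym_pairs (removed_edges p c q x y)))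
             (added_edges p c q x y).
  rewrite /= (negbTE (relocatable_nedge H)) /= andbT; apply/andP; split; apply/implyP.
    rewrite sym => ex; have [->|[-> ->]] := chain_head_nbr ex (relocatable_x H);
    by rewrite mem_sym_pairs !inE eqxx ?orbT.
  move=> ey; have [->|[-> <-]] := chain_last_nbr ey (relocatable_y H);
  by rewrite mem_sym_pairs !inE eqxx ?orbT.
rewrite mem_sym_pairs => /orP[/(allP E)/implyP//|/(allP E)/implyP /=].
by rewrite sym sym_pairsC => /[apply].
Qed.

Lemma relocate_count u v : e' u v + ((u, v) \in sym_pairs (removed_edges p c q x y)) =
  e u v + ((u, v) \in sym_pairs (added_edges p c q x y)).
Proof.
rewrite /relocate; case eR: (_ \in sym_pairs _); case eA: (_ \in sym_pairs _);
  case ee: (e u v) => //=.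
- by rewrite (removed_sub eR) in ee.
- by rewrite (removed_sub eR) in ee.
- by rewrite (added_sub eA ee) in eR.
Qed.

Lemma relocate_irr : irreflexive e'.
Proof.
have [_ _ pq] := chain_ends_notin.
move=> u; rewrite /relocate (relocatable_irr H) /= mem_sym_pairs orbb !inE !xpair_eqE.
apply/negP => /or3P[] /andP[/eqP-> /eqP E].
- by move: (relocatable_x H); rewrite E chain_head_in.
- by move: (relocatable_y H); rewrite -E chain_last_in.
- by rewrite E eqxx in pq.
Qed.

Lemma sum_relocate (g : 'I_n -> 'I_n -> nat) :
  \sum_u \sum_v e' u v * g u v + \sum_(uv <- sym_pairs (removed_edges p c q x y)) g uv.1 uv.2 =
  \sum_u \sum_v e u v * g u v + \sum_(uv <- sym_pairs (added_edges p c q x y)) g uv.1 uv.2.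
Proof.
have [uR uA] := relocation_pairs_uniq.
exact: sum_exchange uR uA relocate_count.
Qed.

Lemma deg_relocate z : deg e' z = deg e z.
Proof.
have := sum_relocate (fun u _ => (u == z : nat)).
by rewrite -!deg_double_sum !big_cat !big_map !big_cons !big_nil /=; lia.
Qed.

Lemma card_edges_relocate : #|edges e'| = #|edges e|.
Proof.
have := sum_relocate (fun _ _ => 1).
have sym := relocatable_sym H; have sym' := relocate_sym p c q x y sym.
rewrite -(card_edges_sum sym' relocate_irr) -(card_edges_sum sym (relocatable_irr H)).
by rewrite !big_cat !big_map !big_cons !big_nil /=; lia.
Qed.
Lemma M2_relocate :
  M2 e' + (deg e p * deg e c1 + deg e cm * deg e q + deg e x * deg e y) =
  M2 e + (deg e x * deg e c1 + deg e cm * deg e y + deg e p * deg e q).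
Proof.
have sym := relocatable_sym H; have sym' := relocate_sym p c q x y sym.
have := sum_relocate (fun u v => deg e u * deg e v).
rewrite -(M2_sum sym (relocatable_irr H)).
have -> : \sum_u \sum_v e' u v * (deg e u * deg e v) = 2 * M2 e'.
  rewrite (M2_sum sym' relocate_irr); apply: eq_bigr => u _; apply: eq_bigr => v _.
  by rewrite !deg_relocate.
rewrite !big_cat !big_map !big_cons !big_nil /= !(mulnC (deg e c1)) !(mulnC (deg e q)).
rewrite !(mulnC (deg e y)); lia.
Qed.

Lemma chain_sorted_relocate : sorted e' c.
Proof.
apply: (sub_in_sorted (P := mem c)) chain_sorted; last exact/allP.
have [pc qc _] := chain_ends_notin; have xc := relocatable_x H.
move=> u v uc vc euv; rewrite /relocate euv mem_sym_pairs !inE !xpair_eqE /=.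
by apply/orP; left; apply/negP => /orP[] /or3P[] /andP[/eqP E1 /eqP E2];
  move: uc vc; rewrite ?E1 ?E2 ?(negbTE pc) ?(negbTE qc) ?(negbTE xc) ?andbF.
Qed.
Lemma relocateK : relocate e' x c y p q =2 e.
Proof.
move=> u v; rewrite {1}/relocate /removed_edges /added_edges (chain_head y) (chain_last x).
rewrite -[[:: (x, c1); _; _]]/(added_edges p c q x y).
rewrite -[[:: (p, c1); _; _]]/(removed_edges p c q x y) /relocate.
case eR: (_ \in sym_pairs _); case eA: (_ \in sym_pairs _); case ee: (e u v) => //=.
- by rewrite (removed_sub eR) in ee.
- by rewrite (removed_sub eR) in ee.
- by rewrite (added_sub eA ee) in eR.
Qed.

Lemma relocatable_relocate : relocatable e' x c y p q.
Proof.
have [pc qc pq] := chain_ends_notin; have [xc yc] := (relocatable_x H, relocatable_y H).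
have added uv : uv \in added_edges p c q x y -> e' uv.1 uv.2.
  by case: uv => u v uvA; apply/orP; right; rewrite mem_sym_pairs uvA.
split.
- exact: relocate_sym (relocatable_sym H).
- exact: relocate_irr.
- exact: relocatable_chain H.
- rewrite rcons_path (chain_last x) (added (cm, y)) ?inE ?eqxx ?orbT // andbT.
  have := chain_sorted_relocate; have := added (x, c1) (mem_head _ _).
  by case: c (relocatable_chain H) => // a c' _ /= -> ->.
- by rewrite /= mem_rcons inE negb_or relocatable_xy xc rcons_uniq yc chain_uniq.
- by apply/allP => z zc; rewrite deg_relocate chain_deg.
- by rewrite (added (p, q)) // !inE eqxx !orbT.
- exact: pc.
- exact: qc.
- have := relocatable_neq H; rewrite /relocate mem_sym_pairs !inE eqxx !orbT /= andbF /=.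
  move=> /andP[/negbTE-> /negbTE->]; rewrite !xpair_eqE eqxx /=.
  rewrite (negbTE (memPnC yc _ chain_head_in)) (negbTE (memPnC xc _ chain_last_in)).
  by rewrite (negbTE (memPnC xc _ chain_head_in)) (negbTE relocatable_xy).
- have /andP[npq nqp] := relocatable_neq H; rewrite eq_sym npq /=.
  by move: nqp; rewrite !xpair_eqE andbC (eq_sym x) (eq_sym y).
- by rewrite !deg_relocate orbC; apply: relocatable_ends H.
Qed.
End Relocatable.


End Relocation.

Section RelocateSegments.
Variables (n : nat) (d : 'I_n).
Variables (e : rel 'I_n) (p : 'I_n) (c : seq 'I_n) (q x y : 'I_n).
Hypothesis H : relocatable e p c q x y.
Local Notation c1 := (head q c).
Local Notation cm := (last p c).
Local Notation e' := (relocate e p c q x y).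
Implicit Types (s t : seq 'I_n).

Lemma sorted_relocate t : sorted e t -> c1 \notin t -> cm \notin t ->
  ~~ consecutive t x y -> ~~ consecutive t y x -> sorted e' t.
Proof.
move=> P c1t cmt nxy nyx; apply: sub_consecutive_sorted P => u v uv euv.
rewrite /relocate euv mem_sym_pairs !inE !xpair_eqE /=; apply/orP; left.
have /andP[ut vt] := consecutive_mem uv.
apply/negP => /orP[] /or3P[] /andP[/eqP E1 /eqP E2]; subst u v;
  by rewrite ?ut ?vt ?uv in c1t cmt nxy nyx.
Qed.

Lemma segment_through_chain s : segment_seq d e s -> consecutive s p c1 ->
  exists s1 r, s = s1 ++ p :: c ++ q :: r.
Proof.
move=> S /consecutiveP[s1 [s2 Es]]; have [a [c' Ec]] := chain_cons H.
have [r Er] : exists r, s2 = rcons c' q ++ r.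
  have c1a : c1 = a by rewrite Ec.
  rewrite c1a in Es; apply: (unbranched_walk_prefix (a := p) (b := a)).
  - by move: (chain_unbranched H); rewrite Ec; apply.
  - by have := segment_uniq S; rewrite Es cat_uniq => /and3P[].
  - by have := segment_sorted S; rewrite Es => /cat_sorted2[_ /andP[]].
  - rewrite belast_rcons -Ec; apply/negP => /(chain_deg H) dl.
    by have := segment_last S; rewrite Es last_cat /= dl.
by exists s1, r; rewrite Es Er Ec cat_rcons.
Qed.

Lemma segment_seq_relocate s : 1 < size s -> uniq s -> sorted e' s ->
  deg e (head d s) != 2 -> deg e (last d s) != 2 ->
  (forall z, z \in s -> deg e z != 2 -> z = head d s \/ z = last d s) ->
  segment_seq d e' s.
Proof.
move=> sz U P dh dl ends; split; rewrite ?(deg_relocate H) //.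
by move=> z; rewrite (deg_relocate H); apply: ends.
Qed.

Lemma realized_through_chain s : segment_seq d e s -> consecutive s p c1 ->
  realized d e' (seq_ends d s).
Proof.
move=> S /(segment_through_chain S)[s1 [r Es]].
have Es1 : s = rcons s1 p ++ c ++ q :: r by rewrite Es cat_rcons.
have Es2 : s = (rcons s1 p ++ c) ++ q :: r by rewrite Es1 catA.
have [P1 P2] : sorted e (rcons s1 p) /\ sorted e (q :: r).
  have P := segment_sorted S; split.
    by move: P; rewrite Es1 => /cat_sorted2[].
  by move: P; rewrite Es2 => /cat_sorted2[].
have U := segment_uniq S; rewrite {1}Es1 in U.
have /andP[c1l c1r] := uniq_cat3_notin U (chain_head_in H).
have /andP[cml cmr] := uniq_cat3_notin U (chain_last_in H).
have parts : sorted e' (rcons s1 p) && sorted e' (q :: r).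
  case/orP: (relocatable_ends H) => /andP[du dv].
    have S1 : segment_seq d e (s1 ++ p :: (c ++ q :: r)) by rewrite -Es.
    have S2 : segment_seq d e ((s1 ++ p :: c) ++ q :: r) by rewrite -catA -Es.
    have [s1nil|] := segment_end_split S1 du; last by case: (c).
    have [|->] := segment_end_split S2 dv; first by case: (s1).
    by rewrite s1nil.
  have nc u v : deg e u != 2 -> deg e v != 2 -> ~~ consecutive s u v.
    move=> hu hv; apply/negP => /(segment_seq_consecutive S) /(_ hu hv) /(congr1 size).
    by rewrite Es size_cat /= size_cat /=; case: (c) (relocatable_chain H) => //= a c' _; lia.
  have ncl u v : deg e u != 2 -> deg e v != 2 -> ~~ consecutive (rcons s1 p) u v.
    by move=> hu hv; apply: contra (nc u v hu hv); rewrite Es1; apply: consecutive_catl.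
  have ncr u v : deg e u != 2 -> deg e v != 2 -> ~~ consecutive (q :: r) u v.
    by move=> hu hv; apply: contra (nc u v hu hv); rewrite Es2; apply: consecutive_catr.
  by rewrite !sorted_relocate ?ncl ?ncr.
have sub : subseq (s1 ++ [:: p, q & r]) s.
  by rewrite Es; apply: cat_subseq => //=; rewrite eqxx; apply: suffix_subseq.
have [hd ld] : head d (s1 ++ [:: p, q & r]) = head d s /\ last d (s1 ++ [:: p, q & r]) = last d s.
  by rewrite Es !head_cat_cons !last_cat /= last_cat.
exists (s1 ++ [:: p, q & r]); last by rewrite /seq_ends hd ld.
apply: segment_seq_relocate; rewrite ?hd ?ld.
- by rewrite size_cat /= !addnS.
- exact: subseq_uniq sub (segment_uniq S).
- case/andP: parts => Pl Pr; rewrite sorted_cat_cons Pl /=; apply/andP; split => //.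
  by apply/orP; right; rewrite mem_sym_pairs !inE eqxx !orbT.
- exact: segment_head S.
- exact: segment_last S.
- by move=> z /(mem_subseq sub) /(segment_ends S).
Qed.
Lemma segment_avoids_chain s : segment_seq d e s ->
  ~~ consecutive s p c1 -> ~~ consecutive s c1 p -> {in c, forall z, z \notin s}.
Proof.
move=> S npc ncp; have [a [c' Ec]] := chain_cons H; have c1a : c1 = a by rewrite Ec.
rewrite c1a in npc ncp; rewrite Ec -(belast_rcons a c' q).
have ub : unbranched e [:: p, a & rcons c' q] by move: (chain_unbranched H); rewrite Ec.
apply: (unbranched_walk_avoid (x0 := d) (relocatable_sym H) (segment_uniq S)
  (segment_sorted S) ub npc ncp).
rewrite belast_rcons -Ec => z zc _; have dz := chain_deg H zc.
by apply/andP; split; [apply: contraTneq (segment_head S)|apply: contraTneq (segment_last S)];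
  move=> <-; rewrite dz.
Qed.

Lemma realized_insert_chain s : segment_seq d e s -> {in c, forall z, z \notin s} ->
  consecutive s x y -> realized d e' (seq_ends d s).
Proof.
move=> S cs /consecutiveP[s1 [s2 Es]]; set s' := s1 ++ x :: (c ++ y :: s2).
have Es1 : s = rcons s1 x ++ y :: s2 by rewrite Es cat_rcons.
have Es' : s' = rcons s1 x ++ c ++ y :: s2 by rewrite cat_rcons.
have /andP[yl _] : (y \notin rcons s1 x) && (y \notin s2).
  by apply: (uniq_cat3_notin (m := [:: y])) (mem_head _ _); rewrite cat1s -Es1; apply: segment_uniq S.
have /andP[_ xr] : (x \notin s1) && (x \notin y :: s2).
  by apply: (uniq_cat3_notin (m := [:: x])) (mem_head _ _); rewrite cat1s -Es; apply: segment_uniq S.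
have [c1l c1r] : head q c \notin rcons s1 x /\ head q c \notin y :: s2.
  by apply/andP; rewrite -negb_or -mem_cat -Es1 cs // (chain_head_in H).
have [cml cmr] : last p c \notin rcons s1 x /\ last p c \notin y :: s2.
  by apply/andP; rewrite -negb_or -mem_cat -Es1 cs // (chain_last_in H).
have [Pl Pr] : sorted e (rcons s1 x) * sorted e (y :: s2).
  by apply: cat_sorted2; rewrite -Es1; apply: segment_sorted S.
have nc t u v : u \notin t -> ~~ consecutive t u v /\ ~~ consecutive t v u.
  by move=> ut; split; apply: contra ut => /consecutive_mem/andP[].
have [hd ld] : head d s' = head d s /\ last d s' = last d s.
  by rewrite Es !head_cat_cons !last_cat /= last_cat.
exists s'; last by rewrite /seq_ends hd ld.
apply: segment_seq_relocate; rewrite ?hd ?ld.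
- by rewrite size_cat /= size_cat /= !addnS.
- have Pm : perm_eq s' (c ++ s) by rewrite Es' Es1 perm_catCA.
  rewrite (perm_uniq Pm) cat_uniq (chain_uniq H) (segment_uniq S) andbT /=.
  by apply/hasPn => z zs; apply: contraL (cs z) zs.
- have [nxy nyx] := nc _ _ y xr; have [nyx' nxy'] := nc _ _ x yl.
  rewrite sorted_cat_cons -cat_rcons cat_path (relocatable_path (relocatable_relocate H)).
  by rewrite last_rcons (sorted_relocate Pl) //; apply: (sorted_relocate Pr).
- exact: segment_head S.
- exact: segment_last S.
- move=> z; rewrite Es' !mem_cat orbCA => /orP[/(chain_deg H)->//|zs].
  by apply: (segment_ends S); rewrite Es1 mem_cat.
Qed.
Lemma realized_relocate s : segment_seq d e s -> realized d e' (seq_ends d s).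
Proof.
have sym' := relocate_sym p c q x y (relocatable_sym H).
have by_rev t : segment_seq d e t -> realized d e' (seq_ends d (rev t)) -> realized d e' (seq_ends d t).
  by move=> _; rewrite /seq_ends head_rev last_rev => /(realized_rev sym').
move=> S; have Sr := segment_seq_rev (relocatable_sym H) S.
case: (boolP (consecutive s p c1)) => [|npc]; first exact: realized_through_chain.
case: (boolP (consecutive s c1 p)) => [cp|ncp].
  by apply: by_rev S (realized_through_chain Sr _); rewrite consecutive_rev.
have cs := segment_avoids_chain S npc ncp.
case: (boolP (consecutive s x y)) => [|nxy]; first exact: realized_insert_chain.
case: (boolP (consecutive s y x)) => [yx|nyx].
  apply: by_rev S (realized_insert_chain Sr _ _); last by rewrite consecutive_rev.
  by move=> z /cs; rewrite mem_rev.
exists s => //; apply: segment_seq_relocate; try exact: (segment_ends S).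
- exact: segment_size S.
- exact: segment_uniq S.
- by apply: sorted_relocate (segment_sorted S) _ _ nxy nyx; apply: cs;
    [apply: chain_head_in H|apply: chain_last_in H].
- exact: segment_head S.
- exact: segment_last S.
Qed.

End RelocateSegments.

Lemma num_segments_relocate n (e : rel 'I_n) p c q x y : relocatable e p c q x y ->
  num_segments (relocate e p c q x y) = num_segments e.
Proof.
move=> H; apply/eqP; rewrite eqn_leq; apply/andP; split; apply: subset_leq_card.
  apply: (seg_ends_subset (d := p)) => s S.
  exact: realized_eq (relocateK H) (realized_relocate (relocatable_relocate H) S).
exact: (seg_ends_subset (d := p)) (realized_relocate H).
Qed.

Section Trees.
Variable n : nat.
Implicit Types (e : rel 'I_n) (u v w z l : 'I_n).

Lemma connect_descent e z : (forall v, connect e v z) ->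
  exists h : 'I_n -> nat, forall v, v != z -> exists2 w, e v w & h w < h v.
Proof.
move=> C; have ex_len v : exists k, [exists t : k.-tuple 'I_n, path e v t && (last v t == z)].
  case/connectP: (C v) => t P ->; exists (size t).
  by apply/existsP; exists (in_tuple t); rewrite P eqxx.
exists (fun v => ex_minn (ex_len v)) => v vz; case: ex_minnP => k /existsP[t /andP[P /eqP L]] _.
case: t P L => -[|w s] /= sz P L; first by rewrite L eqxx in vz.
case/andP: P => vw P; exists w => //; case: ex_minnP => m _ min_m.
rewrite -(eqP sz) ltnS; apply: min_m; apply/existsP; exists (in_tuple s).
by rewrite /= P L eqxx.
Qed.

Lemma connected_edges e : symmetric e -> (forall u v, connect e u v) -> n.-1 <= #|edges e|.
Proof.
move=> sym C; case: (posnP n) => [n0|n_gt0]; first by rewrite [n in n.-1]n0.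
set z := Ordinal n_gt0.
have [h desc] := connect_descent (fun v => C v z).
pose f v := odflt v [pick w | e v w && (h w < h v)].
have fP v : v != z -> e v (f v) && (h (f v) < h v).
  move=> v0; rewrite /f; case: pickP => [w //|none].
  by have [w vw hw] := desc v v0; have := none w; rewrite vw hw.
pose g v := if (v < f v)%N then (v, f v) else (f v, v).
have gE v : v != z -> g v \in edges e.
  move=> v0; case/andP: (fP v v0) => vf hf; rewrite /g inE.
  case: ltngtP => [lt|gt|/val_inj eq] /=; first by rewrite vf lt.
    by rewrite sym vf gt.
  by rewrite -eq ltnn in hf.
have g_inj : {in [set~ z] &, injective g}.
  move=> u v; rewrite !inE => u0 v0; case/andP: (fP u u0) => _ hu; case/andP: (fP v v0) => _ hv.
  have cyc a b : h a < h b -> h b < h a -> False by move=> ab /(ltn_trans ab); rewrite ltnn.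
  rewrite /g; case: ifP => _; case: ifP => _ [E1 E2] //.
    by case: (cyc v u); [rewrite -E2 | rewrite E1].
  by case: (cyc u v); [rewrite E2 | rewrite -E1].
rewrite -[n in n.-1]card_ord -(cardsC1 z) -(card_in_imset g_inj) subset_leq_card //.
by apply/subsetP => _ /imsetP[v v0 ->]; apply: gE; move: v0; rewrite in_setC1.
Qed.

Lemma tree_edge_unique_path e u v (t : seq 'I_n) : is_tree e -> e u v ->
  path e u t -> uniq (u :: t) -> last u t = v -> t = [:: v].
Proof.
case=> sym irr C E uv P U L; case: (eqVneq t [:: v]) => // tv; exfalso.
pose R := sym_pairs [:: (u, v)]; pose r a b := e a b && ((a, b) \notin R).
have avoid a b : consecutive (u :: t) a b -> (a, b) \notin R.
  rewrite mem_sym_pairs !inE !xpair_eqE => ab; apply/negP => /orP[]/andP[/eqP au /eqP bv].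
    subst a b; have := consecutive_head_succ U ab.
    case: t P U L tv {ab} => [_ _ L|z t' _ /= /andP[_ /andP[zt' _]] L tv vz].
      by move: L => /= L; rewrite L irr in uv.
    subst z; case: t' zt' L tv => [_ _|y t' vt L _]; first by rewrite eqxx.
    by move: vt; rewrite -{1}L /= mem_last.
  by move: ab; rewrite au (negbTE (consecutive_head_pred a U)).
have symr : symmetric r by move=> a b; rewrite /r sym sym_pairsC.
have Cr a b : connect r a b.
  apply: (connect_sub _ (C a b)) => {}a {}b ab; case: (boolP ((a, b) \in R)) => abR.
    have uvr : connect r u v.
      apply/connectP; exists t => //; move: P; rewrite -!/(sorted _ (u :: t)).
      by apply: sub_consecutive_sorted => a' b' /avoid ? eab; rewrite /r eab.
    move: abR; rewrite mem_sym_pairs !inE !xpair_eqE => /orP[]/andP[/eqP-> /eqP->] //.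
    by rewrite (sym_connect_sym symr).
  by apply: connect1; rewrite /r ab.
have uniqR : uniq R.
  have uv' : u != v by apply: contraTneq uv => ->; rewrite irr.
  by rewrite /= inE xpair_eqE (negbTE uv').
have count a b : r a b + ((a, b) \in R) = e a b + ((a, b) \in [::]).
  rewrite /r in_nil addn0; case abR: ((a, b) \in R); last by rewrite andbT addn0.
  move: abR; rewrite mem_sym_pairs !inE !xpair_eqE => /orP[]/andP[/eqP-> /eqP->];
    by rewrite ?uv // sym uv.
have := sum_exchange (fun _ _ => 1) uniqR (isT : uniq [::]) count.
have irrr : irreflexive r by move=> a; rewrite /r irr.
rewrite -(card_edges_sum symr irrr) -(card_edges_sum sym irr) !big_cons !big_nil => Er.
by have := connected_edges symr Cr; move: Er; rewrite E; lia.
Qed.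
Lemma connect_deg_gt0 e u v : connect e u v -> u != v -> 0 < deg e u.
Proof.
case/connectP=> -[|w t] /= P L; first by rewrite L eqxx.
by move=> _; apply/card_gt0P; exists w; rewrite inE; case/andP: P.
Qed.

Lemma tree_leaf e : is_tree e -> 1 < n -> exists l, deg e l = 1.
Proof.
case=> sym irr C E n_gt1; case: (pickP (fun l => deg e l == 1)) => [l /eqP|no_leaf]; first by exists l.
have [z0 [z1 z01]] : exists z0 z1 : 'I_n, z0 != z1.
  by exists (Ordinal (ltnW n_gt1)), (Ordinal n_gt1).
have deg_ge2 u : 2 <= deg e u.
  have [v uv] : exists v, u != v by case: (eqVneq u z0) => [->|]; [exists z1|exists z0].
  by have := connect_deg_gt0 (C u v) uv; have := no_leaf u; case: (deg e u) => [|[|]].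
have : \sum_(u : 'I_n) 2 <= \sum_u deg e u by apply: leq_sum => u _; apply: deg_ge2.
by rewrite sum_degs // E sum_nat_const card_ord; lia.
Qed.

Lemma leaf_nbr_deg e l w z : is_tree e -> deg e l = 1 -> e l w -> z != l -> z != w ->
  1 < deg e w.
Proof.
case=> sym _ C _ Dl lw zl zw; have wl : e w l by rewrite sym.
have w_pos : 0 < deg e w by apply/card_gt0P; exists l; rewrite inE.
rewrite ltn_neqAle w_pos andbT eq_sym.
apply/eqP => Dw; pose S := [:: l; w].
have closed a b : a \in S -> e a b -> b \in S.
  rewrite !inE => /orP[]/eqP-> ab; [rewrite (leaf_nbr Dl lw ab)|rewrite (leaf_nbr Dw wl ab)];
    by rewrite eqxx ?orbT.
have walk a t : a \in S -> path e a t -> last a t \in S.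
  by elim: t a => [|b t IH] a //= aS /andP[ab P]; apply: IH (closed a b aS ab) P.
have : z \in S by case/connectP: (C l z) => t P ->; apply: walk P; rewrite mem_head.
by rewrite !inE (negbTE zl) (negbTE zw).
Qed.

End Trees.

Section RelocateConnected.
Variables (n : nat) (e : rel 'I_n) (p : 'I_n) (c : seq 'I_n) (q x y : 'I_n).
Hypothesis H : relocatable e p c q x y.
Hypotheses (Dy : deg e y = 1) (yp : y != p) (yq : y != q).
Local Notation c1 := (head q c).
Local Notation cm := (last p c).
Local Notation e' := (relocate e p c q x y).

Lemma walk_to_chain_ends z t : path e z t -> uniq (z :: t) -> last z t \in [:: p; q] ->
  z \notin c -> z != y -> connect e' z p || connect e' z q.
Proof.
have sym := relocatable_sym H; have yx : e y x by rewrite sym; apply: relocatable_edge H.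
elim: t z => [|z' t IH] z /=; first by move=> _ _; rewrite !inE => /orP[]/eqP->; rewrite connect0 ?orbT.
case/andP=> zz' P /andP[zt U] L zc zy.
case: (eqVneq z p) => [->|zp]; first by rewrite connect0.
case: (eqVneq z q) => [->|zq]; first by rewrite connect0 orbT.
have z'y : z' != y.
  apply: contraNneq zt => z'y; subst z'.
  have zx : z = x by apply: (leaf_nbr Dy yx); rewrite sym.
  case: t P L {IH U} => [_|w t /andP[/(leaf_nbr Dy yx) wx _] _].
    by rewrite /= !inE (negbTE yp) (negbTE yq).
  by rewrite zx wx !inE eqxx orbT.
have z'c : z' \notin c.
  apply/negP => z'c; have z'z : e z' z by rewrite sym.
  have := unbranched_nbr (chain_unbranched H) z'c z'z.
  by rewrite inE mem_rcons inE (negbTE zp) (negbTE zq) (negbTE zc).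
have ezz' : e' z z'.
  rewrite /relocate zz' mem_sym_pairs !inE !xpair_eqE /=; apply/orP; left.
  have [c1c cmc] := (chain_head_in H, chain_last_in H).
  apply/negP => /orP[] /or3P[] /andP[/eqP E1 /eqP E2]; subst;
    by rewrite ?eqxx ?c1c ?cmc in zp zq zc zy z'y.
by case/orP: (IH z' P U L z'c z'y) => /(connect_trans (connect1 ezz')) ->; rewrite ?orbT.
Qed.

Lemma relocate_connected : (forall u v, connect e u v) -> forall u v, connect e' u v.
Proof.
move=> C; have sym' := relocate_sym p c q x y (relocatable_sym H).
have symC := sym_connect_sym sym'.
have added uv : uv \in added_edges p c q x y -> connect e' uv.1 uv.2.
  by case: uv => u v uvA; apply: connect1; apply/orP; right; rewrite mem_sym_pairs uvA.
have px : connect e' p x.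
  case/connectP: (C x p) => t0 P0; case: (shortenP P0) => t P U _ L.
  have := walk_to_chain_ends P U; rewrite -L !inE eqxx.
  case/(_ isT (relocatable_x H) (relocatable_xy H))/orP => [xp|xq]; first by rewrite symC.
  apply: connect_trans (added (p, q) _) _; last by rewrite symC.
  by rewrite !inE eqxx !orbT.
have [a [c' Ec]] := chain_cons H.
have c1cm : connect e' c1 cm.
  apply/connectP; exists c'; last by rewrite Ec.
  by have := chain_sorted_relocate H; rewrite Ec.
have hub v : v \in [:: p; q; x; c1; cm; y] -> connect e' p v.
  have pc1 : connect e' p c1 by apply: connect_trans px (added (x, c1) _); rewrite inE eqxx.
  have pcm := connect_trans pc1 c1cm.
  rewrite !inE => /or4P[/eqP->|/eqP->|/eqP->|/or3P[/eqP->|/eqP->|/eqP->]] //.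
  - by apply: (added (p, q)); rewrite !inE eqxx !orbT.
  - by apply: connect_trans pcm (added (cm, y) _); rewrite !inE eqxx !orbT.
have removed_hub u v : (u, v) \in sym_pairs (removed_edges p c q x y) ->
    (u \in [:: p; q; x; c1; cm; y]) && (v \in [:: p; q; x; c1; cm; y]).
  by rewrite mem_sym_pairs !inE !xpair_eqE => /orP[]/or3P[]/andP[/eqP-> /eqP->];
    rewrite !eqxx !orbT.
have pz z : connect e' p z.
  apply: (connect_sub _ (C p z)) => u v uv.
  case uvR: ((u, v) \in sym_pairs (removed_edges p c q x y)).
    case/andP: (removed_hub u v uvR) => /hub pu /hub pv.
    by apply: connect_trans pv; rewrite symC.
  by apply: connect1; rewrite /relocate uv uvR.
by move=> u v; apply: connect_trans (pz v); rewrite symC.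
Qed.
End RelocateConnected.

Section MainArgument.
Variable n : nat.
Implicit Types (e : rel 'I_n) (c : seq 'I_n) (p q x y l w : 'I_n).

Lemma M2_relocate_lt e p c q x y : relocatable e p c q x y ->
  2 < deg e p -> 2 < deg e q -> 1 < deg e x -> deg e y = 1 -> M2 e < M2 (relocate e p c q x y).
Proof.
move=> H dp dq dx dy; have := M2_relocate H.
rewrite (chain_deg H (chain_head_in H)) (chain_deg H (chain_last_in H)) dy; nia.
Qed.

Lemma relocate_in_CT e p c q x y k : relocatable e p c q x y -> in_CT e k ->
  deg e y = 1 -> y != p -> y != q -> in_CT (relocate e p c q x y) k.
Proof.
move=> H [[[sym irr C E] D4] Nk] Dy yp yq; split; last by rewrite num_segments_relocate.
split; last by move=> z; rewrite (deg_relocate H).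
split; first exact: relocate_sym.
- exact: relocate_irr.
- exact: relocate_connected.
- by rewrite (card_edges_relocate H).
Qed.

Lemma tree_chain_relocatable e x c q l w : is_tree e -> c != [::] ->
  path e x (rcons c q) -> uniq (x :: rcons c q) -> all (fun z => deg e z == 2) c ->
  2 < deg e x -> 2 < deg e q -> deg e l = 1 -> e l w -> relocatable e x c q w l.
Proof.
move=> T cne P U A dx dq Dl lw; have [sym irr _ _] := T.
have [lx lq] : l != x /\ l != q by split; apply/eqP => E; move: Dl; rewrite E; lia.
have lc : l \notin c by apply/negP => /(allP A); rewrite Dl.
split=> //; first by rewrite sym.
- apply: contraTN lw => wc; rewrite sym; apply/negP => /(unbranched_nbr (unbranched_chain sym P U A) wc).
  by rewrite inE mem_rcons inE (negbTE lx) (negbTE lq) (negbTE lc).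
- apply/negP => /(tree_edge_unique_path T) /(_ P U) /(_ (last_rcons _ _ _)).
  by case: c cne {P U A lc} => // a [].
- by rewrite !xpair_eqE (negbTE lq) (negbTE lx) !andbF.
- by rewrite (gtn_eqF dx) (gtn_eqF dq).
Qed.

Lemma internal_path_chain e x (s : seq 'I_n) : internal_path e x s ->
  exists c q, [/\ s = rcons c q, path e x (rcons c q), uniq (x :: rcons c q),
    all (fun z => deg e z == 2) c & (2 < deg e x) && (2 < deg e q)].
Proof.
case/and4P=> /and3P[sne U P] dx dq A; exists (inner_vertices x s), (last x s).
have Es : s = rcons (inner_vertices x s) (last x s).
  by case: s sne {U P dx dq A} => // a s' _; apply: lastI.
by rewrite -Es dx dq.
Qed.

End MainArgument.

Unset Implicit Arguments. Set Strict Implicit.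
Theorem lemma3 (n k : nat) (e : rel 'I_n) :
  3 <= k -> k <= n - 1 ->
  in_CT e k ->
  (forall e' : rel 'I_n, in_CT e' k -> M2 e' <= M2 e) ->
  forall (x : 'I_n) (p : seq 'I_n), internal_path e x p -> size p <= 1.
Proof.
move=> _ _ CT Max x _ /internal_path_chain[c [q [-> P U A /andP[dx dq]]]].
rewrite size_rcons ltnS leqn0 size_eq0; apply: contraT => cne.
have T := CT.1.1; have n_gt1 : 1 < n.
  have xq : x != q by move: U; rewrite /= mem_rcons inE negb_or => /andP[/andP[]].
  apply: contraTT xq; rewrite -leqNgt => n_le1; apply/negPn/eqP/val_inj => /=.
  by have := ltn_ord q; have := ltn_ord x; lia.
have [l Dl] := tree_leaf T n_gt1.
have [w lw] : exists w, e l w.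
  have /card_gt0P[w] : 0 < #|[set v | e l v]| by rewrite -/(deg e l) Dl.
  by rewrite inE; exists w.
have [lx lq] : l != x /\ l != q by split; apply/eqP => E; [move: dx|move: dq]; rewrite -E Dl.
have dw : 1 < deg e w.
  case: (eqVneq w x) => [->|wx]; first exact: ltnW.
  by apply: (leaf_nbr_deg (z := x) T Dl lw); rewrite eq_sym.
have H := tree_chain_relocatable T cne P U A dx dq Dl lw.
have := Max _ (relocate_in_CT H CT Dl lx lq).
by rewrite leqNgt (M2_relocate_lt H dx dq dw Dl).
Qed.
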